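(* Assume $\ell=2$ and the IV model (exclusion, random assignment, consistency). Then for every full data law satisfying these assumptions and inducing an observed law $\mathcal P$, $$\max_{\mathbf v\in\mathcal V}\mathbf v^\top\mathbf p\;\le\;\mathrm{ATE}\;\le\;-\max_{\mathbf v\in\mathcal V}\mathbf v^\top\bar{\mathbf p},$$ and these bounds are sharp: for every observed law $\mathcal P$ induced by some full data law satisfying the assumptions, there exist full data laws satisfying the assumptions and inducing $\mathcal P$ whose ATE equals the lower bound and the upper bound, respectively.
   Context: IV setting: $D\in\{0,1\}$ treatment; $Y$ outcome with values $\gamma_0<\dots<\gamma_{n-1}$; instrument $Z\in\{0,1\}$; $[n]=\{0,\dots,n-1\}$. Potential outcomes $Y^{(d,z)}$, potential treatments $D^{(z)}$. Assumptions: (Exclusion) $Y^{(d,0)}=Y^{(d,1)}$ a.s., written $Y^{(d)}$; (Random assignment) $Z\perp(Y^{(0)},Y^{(1)},D^{(0)},D^{(1)})$; (Consistency) $Y=(1-D)Y^{(0)}+DY^{(1)}$, $D=\mathbb 1(Z=0)D^{(0)}+\mathbb 1(Z=1)D^{(1)}$. A full data law is a joint law of $(Y^{(0)},Y^{(1)},D^{(0)},D^{(1)},Z)$; it induces the observed law $\mathcal P$ of $(Y,D,Z)$, assumed to have $\mathcal P(Z=z)>0$. $\mathrm{ATE}=\mathbb E[Y^{(1)}-Y^{(0)}]$. Vectors $\mathbf p,\bar{\mathbf p}\in\mathbb R^{4n}$ have entries $p_{ydz}=\mathcal P(Y=\gamma_y,D=d\mid Z=z)$ and $\bar p_{ydz}=p_{y(1-d)z}$;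 $\mathbf v^\top\mathbf p=\sum_{y,d,z}v_{ydz}p_{ydz}$. The set $\mathcal V=\{\mathbf u(\mathbf B):\mathbf B\in S\}\subset\mathbb R^{4n}$ is defined as follows. $S=S_1\cup S_2\cup S_3\subseteq\{0,1\}^{n\times2\times2}$: $\mathbf B\in S_1$ iff some $t\in\{0,\dots,n-2\}$ has $B_{i00}=B_{i01}=1$ for $i\ge t$ and $B_{i00}\ne B_{i01}$ for $i<t$, $B_{i10}\ne B_{i11}$ for all $i$, and some $i,j$ have $B_{i10}=B_{j11}=1$; $\mathbf B\in S_2$ iff $B_{(n-1)00}=B_{(n-1)01}=B_{010}=B_{011}=1$, $B_{i00}\ne B_{i01}$ for $i<n-1$, $B_{j10}\ne B_{j11}$ for $j>0$; $\mathbf B\in S_3$ iff some $t\in\{1,\dots,n-1\}$ has $B_{i10}=B_{i11}=1$ for $i\le t$ and $B_{i10}\ne B_{i11}$ for $i>t$, $B_{i00}\ne B_{i01}$ for all $i$, and some $i,j$ have $B_{i00}=B_{j01}=1$. Set $\alpha=-\gamma_0-\gamma_t$ on $S_1$, $\alpha=-\gamma_0-\gamma_{n-1}$ on $S_2$, $\alpha=-\gamma_t-\gamma_{n-1}$ on $S_3$, and: $u_{i00}=-\gamma_i-\alpha$ if $B_{i00}=1$ else $\gamma_0$; $u_{i10}=\gamma_i$ if $B_{i10}=1$ else $-\gamma_{n-1}-\alpha$; $u_{i01}=-\gamma_i$ if $B_{i01}=1$ else $\gamma_0+\alpha$; $u_{i11}=\gamma_i+\alpha$ if $B_{i11}=1$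 else $-\gamma_{n-1}$. *)

(* Discrete IV model with binary treatment D, binary instrument Z,
   outcome Y taking values gam 0 < ... < gam (n-1) (indexed by 'I_n). *)
From mathcomp Require Import all_boot all_order all_algebra.
Set Implicit Arguments. Unset Strict Implicit. Unset Printing Implicit Defensive.
Import Order.TTheory GRing.Theory Num.Theory.
Local Open Scope ring_scope.

(* A full data law: joint pmf of (Y^(0), Y^(1), D^(0), D^(1), Z), where the
   potential outcomes Y^(d) are already the exclusion-restricted ones
   (Y^(d,0) = Y^(d,1) a.s.); outcome values are indices y : 'I_n standing for gam y.
   Booleans encode {0,1} (true = 1). Argument order: q y0 y1 d0 d1 z. *)
Definition fdlaw (R : realFieldType) (n : nat) :=
  'I_n -> 'I_n -> bool -> bool -> bool -> R.

Definition is_law {R : realFieldType} {n : nat} (q : fdlaw R n) : Prop :=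
  (forall y0 y1 d0 d1 z, 0 <= q y0 y1 d0 d1 z) /\
  \sum_(y0 < n) \sum_(y1 < n) \sum_(d0 : bool) \sum_(d1 : bool) \sum_(z : bool)
      q y0 y1 d0 d1 z = 1.

Definition pZ {R : realFieldType} {n : nat} (q : fdlaw R n) (z : bool) : R :=
  \sum_(y0 < n) \sum_(y1 < n) \sum_(d0 : bool) \sum_(d1 : bool) q y0 y1 d0 d1 z.

Definition pU {R : realFieldType} {n : nat} (q : fdlaw R n) y0 y1 d0 d1 : R :=
  \sum_(z : bool) q y0 y1 d0 d1 z.

Definition rand_assign {R : realFieldType} {n : nat} (q : fdlaw R n) : Prop :=
  forall y0 y1 d0 d1 z, q y0 y1 d0 d1 z = pU q y0 y1 d0 d1 * pZ q z.

(* Full data law satisfying the IV assumptions (exclusion is built into the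
   parametrization, consistency into the observation map below). *)
Definition valid_law {R : realFieldType} {n : nat} (q : fdlaw R n) : Prop :=
  is_law q /\ rand_assign q.

Definition Dobs (d0 d1 z : bool) : bool := if z then d1 else d0.
Definition Yobs {n : nat} (y0 y1 : 'I_n) (d : bool) : 'I_n := if d then y1 else y0.

Definition obs {R : realFieldType} {n : nat} (q : fdlaw R n) (y : 'I_n) (d z : bool) : R :=
  \sum_(y0 < n) \sum_(y1 < n) \sum_(d0 : bool) \sum_(d1 : bool)
    (if (Dobs d0 d1 z == d) && (Yobs y0 y1 (Dobs d0 d1 z) == y)
     then q y0 y1 d0 d1 z else 0).

Definition pvec {R : realFieldType} {n : nat} (q : fdlaw R n) (y : 'I_n) (d z : bool) : R :=
  obs q y d z / pZ q z.

Definition pbar {R : realFieldType} {n : nat} (q : fdlaw R n) (y : 'I_n) (d z : bool) : R :=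
  pvec q y (~~ d) z.

Definition ATE {R : realFieldType} {n : nat} (gam : nat -> R) (q : fdlaw R n) : R :=
  \sum_(y0 < n) \sum_(y1 < n) \sum_(d0 : bool) \sum_(d1 : bool) \sum_(z : bool)
      q y0 y1 d0 d1 z * (gam y1 - gam y0).

Definition vec4 (R : realFieldType) (n : nat) := 'I_n -> bool -> bool -> R.

Definition dot {R : realFieldType} {n : nat} (v w : vec4 R n) : R :=
  \sum_(y < n) \sum_(d : bool) \sum_(z : bool) v y d z * w y d z.

Definition bmat (n : nat) := 'I_n -> bool -> bool -> bool.

Definition inS1 {n : nat} (B : bmat n) (t : nat) : Prop :=
  (t.+2 <= n)%N /\
  (forall i : 'I_n, (t <= i)%N -> B i false false && B i false true) /\
  (forall i : 'I_n, (i < t)%N -> B i false false != B i false true) /\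
  (forall i : 'I_n, B i true false != B i true true) /\
  (exists i j : 'I_n, B i true false && B j true true).

Definition inS2 {n : nat} (B : bmat n) : Prop :=
  (forall i : 'I_n, (i : nat) = n.-1 -> B i false false && B i false true) /\
  (forall i : 'I_n, (i : nat) = 0%N -> B i true false && B i true true) /\
  (forall i : 'I_n, (i < n.-1)%N -> B i false false != B i false true) /\
  (forall j : 'I_n, (0 < j)%N -> B j true false != B j true true).

Definition inS3 {n : nat} (B : bmat n) (t : nat) : Prop :=
  (0 < t)%N /\ (t <= n.-1)%N /\
  (forall i : 'I_n, (i <= t)%N -> B i true false && B i true true) /\
  (forall i : 'I_n, (t < i)%N -> B i true false != B i true true) /\
  (forall i : 'I_n, B i false false != B i false true) /\
  (exists i j : 'I_n, B i false false && B j false true).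

Definition uvec {R : realFieldType} {n : nat} (gam : nat -> R) (B : bmat n) (alpha : R)
  : vec4 R n := fun i d z =>
  match d, z with
  | false, false => if B i false false then - gam i - alpha else gam 0%N
  | true,  false => if B i true false then gam i else - gam n.-1 - alpha
  | false, true  => if B i false true then - gam i else gam 0%N + alpha
  | true,  true  => if B i true true then gam i + alpha else - gam n.-1
  end.

Definition inV {R : realFieldType} {n : nat} (gam : nat -> R) (v : vec4 R n) : Prop :=
  exists B : bmat n,
    (exists t, inS1 B t /\ forall y d z, v y d z = uvec gam B (- gam 0%N - gam t) y d z) \/
    (inS2 B /\ forall y d z, v y d z = uvec gam B (- gam 0%N - gam n.-1) y d z) \/
    (exists t, inS3 B t /\ forall y d z, v y d z = uvec gam B (- gam t - gam n.-1) y d z).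

(* Let W be the law of the response type (Y^(0), Y^(1), D^(0), D^(1)). Under random
   assignment the observed conditional law p is a linear image [pobs W] of W, and v'p is the
   W-mean of the score [vscore v]: the sum over z of the entries of v hit when Z = z. For every
   v in V this score is at most gam_{Y^(1)} - gam_{Y^(0)} pointwise, whence v'p <= ATE; the upper
   bound follows by relabelling the treatment, which swaps p with pbar and negates the ATE.

   For sharpness, build from p a response law [Wsharp] with the same observed law: never-takers
   get Y^(1) = gam_0 and always-takers Y^(0) = gam_(n-1), their remaining outcome is filled
   greedily from the bottom (resp. top) under the caps min(p_y00, p_y01) (resp.
   min(p_y10, p_y11)), with as many always-takers as possible; compliers and defiers couple the
   residual marginals independently. Some B in S then makes the score equal to
   gam_{Y^(1)} - gam_{Y^(0)} on the support of [Wsharp], so the ATE of [Wsharp] is v'p, which is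
   therefore the maximum. *)

From mathcomp Require Import all_boot all_order all_algebra.
From mathcomp Require Import lra zify.
Set Implicit Arguments. Unset Strict Implicit. Unset Printing Implicit Defensive.
Import Order.TTheory GRing.Theory Num.Theory.
Local Open Scope ring_scope.

(** * Response-type laws and scores *)

Section ResponseLaws.
Variables (R : realFieldType) (n : nat).

Definition resp := 'I_n -> 'I_n -> bool -> bool -> R.

Definition rsum (F : resp) : R :=
  \sum_(y0 < n) \sum_(y1 < n) \sum_(d0 : bool) \sum_(d1 : bool) F y0 y1 d0 d1.

Definition pobs (W : resp) : vec4 R n := obs (fun y0 y1 d0 d1 (_ : bool) => W y0 y1 d0 d1).

Definition vscore (v : vec4 R n) (y0 y1 : 'I_n) (d0 d1 : bool) : R :=
  \sum_(z : bool) v (Yobs y0 y1 (Dobs d0 d1 z)) (Dobs d0 d1 z) z.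

Lemma vscoreE (v : vec4 R n) a b c e :
  vscore v a b c e = v (Yobs a b c) c false + v (Yobs a b e) e true.
Proof. by rewrite /vscore big_bool addrC. Qed.

Lemma eq_rsum (F G : resp) : (forall a b c e, F a b c e = G a b c e) -> rsum F = rsum G.
Proof.
by move=> FG; do 4![apply: eq_bigr => ? _]; apply: FG.
Qed.

Lemma ler_rsum (F G : resp) : (forall a b c e, F a b c e <= G a b c e) -> rsum F <= rsum G.
Proof. by move=> FG; do 4![apply: ler_sum => ? _]; apply: FG. Qed.

Lemma rsum_ge0 (F : resp) : (forall a b c e, 0 <= F a b c e) -> 0 <= rsum F.
Proof. by move=> F0; do 4![apply: sumr_ge0 => ? _]; apply: F0. Qed.

Lemma exchange_rsum (I : finType) (F : I -> resp) :
  \sum_i rsum (F i) = rsum (fun a b c e => \sum_i F i a b c e).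
Proof.
rewrite /rsum exchange_big; apply: eq_bigr => a _.
rewrite exchange_big; apply: eq_bigr => b _.
by rewrite exchange_big; apply: eq_bigr => c _; rewrite exchange_big.
Qed.

Lemma rsum_mulr (F : resp) k : rsum F * k = rsum (fun a b c e => F a b c e * k).
Proof. by rewrite /rsum; do 4![rewrite mulr_suml; apply: eq_bigr => ? _]. Qed.

Lemma obs_rsum (q : fdlaw R n) y d z :
  obs q y d z = rsum (fun a b c e =>
    if (Dobs c e z == d) && (Yobs a b (Dobs c e z) == y) then q a b c e z else 0).
Proof. by []. Qed.

Lemma dot_pobs (v : vec4 R n) (W : resp) :
  dot v (pobs W) = rsum (fun a b c e => W a b c e * vscore v a b c e).
Proof.
rewrite /dot /pobs.
under eq_bigr => y _ do under eq_bigr => d _ do under eq_bigr => z _ do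
  rewrite obs_rsum mulrC rsum_mulr.
under eq_bigr => y _ do under eq_bigr => d _ do rewrite exchange_rsum.
under eq_bigr => y _ do rewrite exchange_rsum.
rewrite exchange_rsum; apply: eq_rsum => a b c e.
under eq_bigr => y _ do rewrite exchange_big.
rewrite exchange_big /vscore mulr_sumr; apply: eq_bigr => z _ /=.
rewrite (bigD1 (Yobs a b (Dobs c e z))) //= [X in _ + X]big1 => [|y ny]; last first.
  by apply: big1 => d _; rewrite [_ == y]eq_sym (negbTE ny) andbF mul0r.
rewrite addr0 (bigD1 (Dobs c e z)) //= !eqxx mulrC [X in _ + X]big1 ?addr0 // => d nd.
by rewrite eq_sym (negbTE nd) mul0r.
Qed.

Lemma eq_dot (v X Y : vec4 R n) : (forall y d z, X y d z = Y y d z) -> dot v X = dot v Y.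
Proof. by move=> XY; do 3![apply: eq_bigr => ? _]; rewrite XY. Qed.

Lemma obs_scale (W : resp) (k : bool -> R) y d z :
  obs (fun a b c e z => W a b c e * k z) y d z = pobs W y d z * k z.
Proof.
rewrite /pobs !obs_rsum rsum_mulr; apply: eq_rsum => a b c e.
by case: ifP; rewrite ?mul0r.
Qed.

Lemma obs_rand_assign (q : fdlaw R n) y d z :
  rand_assign q -> obs q y d z = pobs (pU q) y d z * pZ q z.
Proof.
by move=> hq; rewrite -obs_scale !obs_rsum; apply: eq_rsum => a b c e; rewrite hq.
Qed.

Lemma pvec_rand_assign (q : fdlaw R n) y d z :
  rand_assign q -> 0 < pZ q z -> pvec q y d z = pobs (pU q) y d z.
Proof. by move=> hq hz; rewrite /pvec obs_rand_assign // mulfK // gt_eqF. Qed.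

Lemma ATE_pU (gam : nat -> R) (q : fdlaw R n) :
  ATE gam q = rsum (fun a b c e => pU q a b c e * (gam b - gam a)).
Proof. by apply: eq_rsum => a b c e; rewrite /pU mulr_suml. Qed.

Lemma sum_pZ (q : fdlaw R n) : \sum_(z : bool) pZ q z = rsum (pU q).
Proof. exact: exchange_rsum. Qed.

Lemma pU_ge0 (q : fdlaw R n) : is_law q -> forall a b c e, 0 <= pU q a b c e.
Proof. by move=> [q0 _] a b c e; apply: sumr_ge0 => z _. Qed.

Lemma pobs_ge0 (W : resp) :
  (forall a b c e, 0 <= W a b c e) -> forall y d z, 0 <= pobs W y d z.
Proof. by move=> W0 y d z; rewrite /pobs obs_rsum; apply: rsum_ge0 => *; case: ifP. Qed.

Definition tight (gam : nat -> R) (v : vec4 R n) (W : resp) :=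
  forall a b c e, W a b c e != 0 -> vscore v a b c e = gam b - gam a.

Lemma dot_pobs_tight (gam : nat -> R) v (W : resp) :
  tight gam v W -> dot v (pobs W) = rsum (fun a b c e => W a b c e * (gam b - gam a)).
Proof.
move=> hv; rewrite dot_pobs; apply: eq_rsum => a b c e.
by have [->|/hv ->] := eqVneq (W a b c e) 0; rewrite ?mul0r.
Qed.

Lemma eq_rsum_pobs (W W' : resp) : (forall y d z, pobs W y d z = pobs W' y d z) ->
  rsum W = rsum W'.
Proof.
have rsumE (V : resp) : rsum V = dot (fun _ _ z => (~~ z)%:R) (pobs V).
  by rewrite dot_pobs; apply: eq_rsum => a b c e; rewrite /vscore big_bool /= add0r mulr1.
by move=> WW'; rewrite !rsumE (eq_dot _ WW').
Qed.

End ResponseLaws.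

Section CellLaws.
Variables (R : realFieldType) (n : nat) (W : resp R n).

Let sum_if_const (I : finType) (b : bool) (F : I -> R) :
  \sum_(i : I) (if b then F i else 0) = if b then \sum_i F i else 0.
Proof. by case: b => //; rewrite big1. Qed.

Let sum_if_eq (j : 'I_n) (F : 'I_n -> R) :
  \sum_(i < n) (if i == j then F i else 0) = F j.
Proof. by rewrite -big_mkcond big_pred1_eq. Qed.

Lemma pobs_d0z0 y : pobs W y false false = \sum_(b < n) \sum_(e : bool) W y b false e.
Proof.
rewrite /pobs /obs /=.
under eq_bigr => a _ do under eq_bigr => b _ do rewrite big_bool /= big1 // add0r sum_if_const.
under eq_bigr => a _ do rewrite sum_if_const.
exact: sum_if_eq.
Qed.

Lemma pobs_d1z0 y : pobs W y true false = \sum_(a < n) \sum_(e : bool) W a y true e.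
Proof.
rewrite /pobs /obs /=; apply: eq_bigr => a _.
under eq_bigr => b _ do rewrite big_bool /= [X in _ + X]big1 // addr0 sum_if_const.
exact: sum_if_eq.
Qed.

Lemma pobs_d0z1 y : pobs W y false true = \sum_(b < n) \sum_(c : bool) W y b c false.
Proof.
rewrite /pobs /obs /=.
under eq_bigr => a _ do under eq_bigr => b _ do under eq_bigr => c _ do
  rewrite big_bool /= add0r.
under eq_bigr => a _ do under eq_bigr => b _ do rewrite sum_if_const.
under eq_bigr => a _ do rewrite sum_if_const.
exact: sum_if_eq.
Qed.

Lemma pobs_d1z1 y : pobs W y true true = \sum_(a < n) \sum_(c : bool) W a y c true.
Proof.
rewrite /pobs /obs /=; apply: eq_bigr => a _.
under eq_bigr => b _ do under eq_bigr => c _ do rewrite big_bool /= addr0.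
under eq_bigr => b _ do rewrite sum_if_const.
exact: sum_if_eq.
Qed.

End CellLaws.

Section TreatmentSwap.
Variables (R : realFieldType) (n : nat).

Definition swapq (q : fdlaw R n) : fdlaw R n := fun a b c e z => q b a (~~ c) (~~ e) z.

Lemma rsum_swap (F : resp R n) : rsum (fun a b c e => F b a (~~ c) (~~ e)) = rsum F.
Proof.
rewrite /rsum exchange_big; do 2![apply: eq_bigr => ? _].
by rewrite !big_bool /= addrC [X in _ + X]addrC [X in X + _]addrC.
Qed.

Lemma pZ_swap (q : fdlaw R n) z : pZ (swapq q) z = pZ q z.
Proof. exact: (rsum_swap (fun a b c e => q a b c e z)). Qed.

Lemma valid_law_swap (q : fdlaw R n) : valid_law q -> valid_law (swapq q).
Proof.
move=> [[q0 q1] hq]; split; [split|].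
- by move=> *; apply: q0.
- exact: etrans (rsum_swap (pU q)) q1.
- by move=> a b c e z; rewrite /swapq hq pZ_swap.
Qed.

Lemma obs_swap (q : fdlaw R n) y d z : obs (swapq q) y d z = obs q y (~~ d) z.
Proof.
rewrite !obs_rsum -rsum_swap; apply: eq_rsum => a b c e.
by rewrite /swapq !negbK; case: z c e d => -[] [] [].
Qed.

Lemma pvec_swap (q : fdlaw R n) y d z : pvec (swapq q) y d z = pbar q y d z.
Proof. by rewrite /pvec /pbar obs_swap pZ_swap. Qed.

Lemma ATE_swap (gam : nat -> R) (q : fdlaw R n) : ATE gam (swapq q) = - ATE gam q.
Proof.
rewrite !ATE_pU -(rsum_swap (fun a b c e => pU (swapq q) a b c e * _)).
rewrite /rsum -!sumrN; do 4![apply: eq_bigr => ? _; rewrite -?sumrN].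
by rewrite /pU /swapq !negbK -mulrN opprB.
Qed.

End TreatmentSwap.

(** * Validity of the bounds *)

Section Validity.
Variables (R : realFieldType) (m : nat).
Local Notation n := m.+1.
Variable gam : nat -> R.
Hypothesis gam_mono : forall i j : nat, (i <= j)%N -> (j < n)%N -> gam i <= gam j.

Let gam_ge_min (a : 'I_n) : gam 0 <= gam a.
Proof. exact: gam_mono. Qed.
Let gam_le_max (a : 'I_n) : gam a <= gam m.
Proof. exact: gam_mono (leq_ord a) (ltnSn m). Qed.

Lemma vscore_le_S1 (B : bmat n) t : inS1 B t ->
  forall a b c e, vscore (uvec gam B (- gam 0 - gam t)) a b c e <= gam b - gam a.
Proof.
move=> [ht [Hge [Hlt [Hx _]]]] a b c e.
have htn : (t < n)%N by lia.
have := gam_ge_min a; have := gam_ge_min b; have := gam_le_max a; have := gam_le_max b.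
have := gam_mono (leq0n t) htn; have := gam_mono (j := m) htn (ltnSn m).
rewrite vscoreE /uvec; case: c; case: e => /=.
- move: (Hx b); case: (B b true false); case: (B b true true) => //= *; lra.
- case: (leqP t a) => hta.
  + move: (Hge a hta) => /andP[_ ->].
    have := gam_mono hta (ltn_ord a).
    case: (B b true false) => *; lra.
  + have := gam_mono (ltnW hta) htn.
    case: (B b true false); case: (B a false true) => *; lra.
- case: (leqP t a) => hta.
  + move: (Hge a hta) => /andP[-> _].
    have := gam_mono hta (ltn_ord a).
    case: (B b true true) => *; lra.
  + have := gam_mono (ltnW hta) htn.
    case: (B b true true); case: (B a false false) => *; lra.
- case: (leqP t a) => hta.
  + move: (Hge a hta) => /andP[-> ->].
    have := gam_mono hta (ltn_ord a) => *; lra.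
  + move: (Hlt a hta); case: (B a false false); case: (B a false true) => //= *; lra.
Qed.

Lemma vscore_le_S2 (B : bmat n) : inS2 B ->
  forall a b c e, vscore (uvec gam B (- gam 0 - gam m)) a b c e <= gam b - gam a.
Proof.
move=> [H0 [H1 [H2 H3]]] a b c e.
have := gam_ge_min a; have := gam_ge_min b; have := gam_le_max a; have := gam_le_max b.
rewrite vscoreE /uvec; case: c; case: e => /=.
- case: (ltnP 0 b) => hb.
  + move: (H3 b hb); case: (B b true false); case: (B b true true) => //= *; lra.
  + have hb0 : (b : nat) = 0%N by lia.
    move: (H1 b hb0) => /andP[-> ->]; rewrite hb0 => *; lra.
- case: (B b true false); case: (B a false true) => *; lra.
- case: (B b true true); case: (B a false false) => *; lra.
- case: (ltnP a m) => ha.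
  + move: (H2 a ha); case: (B a false false); case: (B a false true) => //= *; lra.
  + have ham : (a : nat) = m by move: (ltn_ord a); lia.
    move: (H0 a ham) => /andP[-> ->]; rewrite ham => *; lra.
Qed.

Lemma vscore_le_S3 (B : bmat n) t : inS3 B t ->
  forall a b c e, vscore (uvec gam B (- gam t - gam m)) a b c e <= gam b - gam a.
Proof.
move=> [ht0 [htm [Hle [Hgt [Hx _]]]]] a b c e.
have htn : (t < n)%N by lia.
have := gam_ge_min a; have := gam_ge_min b; have := gam_le_max a; have := gam_le_max b.
have := gam_mono (leq0n t) htn; have := gam_mono htm (ltnSn m).
rewrite vscoreE /uvec; case: c; case: e => /=.
- case: (leqP b t) => hb.
  + move: (Hle b hb) => /andP[-> ->]; have := gam_mono hb htn => *; lra.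
  + move: (Hgt b hb); case: (B b true false); case: (B b true true) => //= *; lra.
- case: (leqP b t) => hb.
  + move: (Hle b hb) => /andP[-> _]; case: (B a false true) => *; lra.
  + have := gam_mono (ltnW hb) (ltn_ord b).
    case: (B b true false); case: (B a false true) => *; lra.
- case: (leqP b t) => hb.
  + move: (Hle b hb) => /andP[_ ->]; case: (B a false false) => *; lra.
  + have := gam_mono (ltnW hb) (ltn_ord b).
    case: (B b true true); case: (B a false false) => *; lra.
- move: (Hx a); case: (B a false false); case: (B a false true) => //= *; lra.
Qed.

Lemma vscore_le (v : vec4 R n) : inV gam v ->
  forall a b c e, vscore v a b c e <= gam b - gam a.
Proof.
move=> [B [[t [hS hv]] | [[hS hv] | [t [hS hv]]]]] a b c e; rewrite !vscoreE !hv -vscoreE.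
- exact: vscore_le_S1.
- exact: vscore_le_S2.
- exact: vscore_le_S3.
Qed.

Lemma dot_pobs_le (W : resp R n) v : (forall a b c e, 0 <= W a b c e) -> inV gam v ->
  dot v (pobs W) <= rsum (fun a b c e => W a b c e * (gam b - gam a)).
Proof.
move=> W0 hv; rewrite dot_pobs; apply: ler_rsum => a b c e.
by rewrite ler_wpM2l // vscore_le.
Qed.

Lemma dot_pvec_le_ATE (q : fdlaw R n) v : valid_law q ->
  0 < pZ q false -> 0 < pZ q true -> inV gam v -> dot v (pvec q) <= ATE gam q.
Proof.
move=> [hq hr] hz0 hz1 hv.
have pvecE y d z : pvec q y d z = pobs (pU q) y d z.
  by case: z; exact: pvec_rand_assign.
by rewrite (eq_dot v pvecE) ATE_pU; apply: dot_pobs_le (pU_ge0 hq) hv.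
Qed.

End Validity.


(** * A sharp response law *)

Definition bcut (n : nat) (t s : nat) (f0 f1 : 'I_n -> bool) : bmat n :=
  fun y d z => if d then (y < s)%N || (if z then ~~ f1 y else f1 y)
               else (t <= y)%N || (if z then ~~ f0 y else f0 y).

Section Staircase.
Variables (n t s : nat) (f0 f1 : 'I_n -> bool).
Local Notation B := (bcut t s f0 f1).

Lemma bcut1_lt (y : 'I_n) z : (y < s)%N -> B y true z.
Proof. by rewrite /bcut => ->. Qed.

Lemma bcut1_ge (y : 'I_n) z : (s <= y)%N -> B y true z = if z then ~~ f1 y else f1 y.
Proof. by move=> sy; rewrite /bcut ltnNge sy. Qed.

Lemma bcut0_ge (y : 'I_n) z : (t <= y)%N -> B y false z.
Proof. by rewrite /bcut => ->. Qed.

Lemma bcut0_lt (y : 'I_n) z : (y < t)%N -> B y false z = if z then ~~ f0 y else f0 y.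
Proof. by move=> yt; rewrite /bcut leqNgt yt. Qed.

Lemma bcut1_split (y : 'I_n) : (s <= y)%N -> B y true false != B y true true.
Proof. by move=> ys; rewrite !bcut1_ge //; case: (f1 y). Qed.

Lemma bcut0_split (y : 'I_n) : (y < t)%N -> B y false false != B y false true.
Proof. by move=> yt; rewrite !bcut0_lt //; case: (f0 y). Qed.

End Staircase.

Section StaircaseInS.
Variables (m : nat) (f0 f1 : 'I_m.+1 -> bool).

Lemma inS2_bcut : inS2 (bcut m 1 f0 f1).
Proof.
split; [|split; [|split]] => i hi.
- by rewrite !bcut0_ge // hi.
- by rewrite !bcut1_lt // hi.
- exact: bcut0_split.
- exact: bcut1_split.
Qed.

Lemma inS1_bcut t : (t < m)%N -> (exists i, f1 i) -> (exists j, ~~ f1 j) ->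
  inS1 (bcut t 0 f0 f1) t.
Proof.
move=> tm [i hi] [j hj]; split; [lia | split; [|split; [|split]]].
- by move=> k hk; rewrite !bcut0_ge.
- exact: bcut0_split.
- by move=> k; apply: bcut1_split.
- by exists i, j; rewrite !bcut1_ge //= hi.
Qed.

Lemma inS3_bcut t : (0 < t)%N -> (t <= m)%N -> (exists i, f0 i) -> (exists j, ~~ f0 j) ->
  inS3 (bcut m.+1 t.+1 f0 f1) t.
Proof.
move=> t0 tm [i hi] [j hj]; split; [done | split; [done | split; [|split; [|split]]]].
- by move=> k hk; rewrite !bcut1_lt.
- exact: bcut1_split.
- by move=> k; apply: bcut0_split.
- by exists i, j; rewrite !bcut0_lt //= hi.
Qed.

End StaircaseInS.

Section TypeScores.
Variables (R : realFieldType) (m : nat) (gam : nat -> R) (B : bmat m.+1) (al : R).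
Local Notation v := (uvec gam B al).

Lemma vscore_complier a b : B a false false -> B b true true ->
  vscore v a b false true = gam b - gam a.
Proof. by rewrite vscoreE /uvec /= => -> ->; lra. Qed.

Lemma vscore_defier a b : B b true false -> B a false true ->
  vscore v a b true false = gam b - gam a.
Proof. by rewrite vscoreE /uvec /= => -> ->; lra. Qed.

Lemma vscore_never_split a b : B a false false != B a false true ->
  vscore v a b false false = gam 0 - gam a.
Proof.
by rewrite vscoreE /uvec /=; case: (B a false false); case: (B a false true) => //= _; lra.
Qed.

Lemma vscore_never_both a b : B a false false -> B a false true ->
  vscore v a b false false = - gam a - al - gam a.
Proof. by rewrite vscoreE /uvec /= => -> ->; lra. Qed.

Lemma vscore_always_split a b : B b true false != B b true true ->
  vscore v a b true true = gam b - gam m.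
Proof.
by rewrite vscoreE /uvec /=; case: (B b true false); case: (B b true true) => //= _; lra.
Qed.

Lemma vscore_always_both a b : B b true false -> B b true true ->
  vscore v a b true true = gam b + (gam b + al).
Proof. by rewrite vscoreE /uvec /= => -> ->. Qed.

End TypeScores.

Section TypeScoresS2.
Variables (R : realFieldType) (m : nat) (gam : nat -> R) (f0 f1 : 'I_m.+1 -> bool).
Local Notation v := (uvec gam (bcut m 1 f0 f1) (- gam 0 - gam m)).

Lemma vscore_never_S2 a b : vscore v a b false false = gam 0 - gam a.
Proof.
have [am|ma] := ltnP a m; first by rewrite vscore_never_split // bcut0_split.
have am : a = m :> nat by have := ltn_ord a; lia.
by rewrite vscore_never_both ?bcut0_ge // am; lra.
Qed.

Lemma vscore_always_S2 a b : vscore v a b true true = gam b - gam m.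
Proof.
have [b0|b0] := posnP b; last by rewrite vscore_always_split // bcut1_split.
by rewrite vscore_always_both ?bcut1_lt ?b0 //; lra.
Qed.

End TypeScoresS2.

Lemma sum_ltn_succ (R : realFieldType) (n : nat) (F : 'I_n -> R) (i : 'I_n) :
  \sum_(j < n | (j < i.+1)%N) F j = \sum_(j < n | (j < i)%N) F j + F i.
Proof.
rewrite (bigD1 i) ?ltnSn //= addrC; congr (_ + _); apply: eq_bigl => j.
by rewrite ltnS ltn_neqAle andbC.
Qed.

Section Greedy.
Variables (R : realFieldType) (m : nat).
Local Notation n := m.+1.
Variables (cap : 'I_n -> R) (T : R).
Hypothesis cap_ge0 : forall i, 0 <= cap i.

Definition cap_below (k : nat) : R := \sum_(i < n | (i < k)%N) cap i.

Definition greedy (y : 'I_n) : R := Num.min (cap y) (Num.max 0 (T - cap_below y)).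

Lemma greedy_ge0 y : 0 <= greedy y.
Proof. by rewrite le_min cap_ge0 le_max lexx. Qed.

Lemma greedy_le_cap y : greedy y <= cap y.
Proof. by rewrite ge_min lexx. Qed.

Lemma cap_below_le k k' : (k <= k')%N -> cap_below k <= cap_below k'.
Proof.
move=> kk'; rewrite /cap_below [leLHS]big_mkcond [leRHS]big_mkcond.
apply: ler_sum => i _; case: ifP => ik; first by rewrite (leq_trans ik kk').
by case: ifP.
Qed.

Lemma sum_greedy_below k : (k <= n)%N -> 0 <= T ->
  \sum_(i < n | (i < k)%N) greedy i = Num.min T (cap_below k).
Proof.
move=> + T0; elim: k => [_|k IHk kn].
  by rewrite /cap_below !big_pred0 // min_r.
have := sum_ltn_succ greedy (Ordinal kn); have := sum_ltn_succ cap (Ordinal kn).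
rewrite /= -/(cap_below k) -/(cap_below k.+1) IHk ?(ltnW kn) // => -> ->.
rewrite /greedy /=; have := cap_ge0 (Ordinal kn).
set c := cap _; set P := cap_below k => c0.
by rewrite !minEle !maxEle; do !case: ifP; move=> *; lra.
Qed.

Lemma sum_greedy : 0 <= T <= \sum_i cap i -> \sum_i greedy i = T.
Proof.
move=> /andP[T0 Tcap].
have below_n (F : 'I_n -> R) : \sum_(i < n | (i < n)%N) F i = \sum_i F i.
  by apply: eq_bigl => i; rewrite ltn_ord.
by rewrite -below_n sum_greedy_below // /cap_below below_n min_l.
Qed.

Lemma greedy_full : T = \sum_i cap i -> forall y, greedy y = cap y.
Proof.
move=> Tsum y; apply/eqP; rewrite -subr_eq0 -oppr_eq0 opprB; apply/eqP.
apply: (@psumr_eq0P _ _ xpredT (fun i => cap i - greedy i)) => // [i _|].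
- by rewrite subr_ge0 greedy_le_cap.
- rewrite sumrB sum_greedy Tsum ?subrr // lexx andbT.
  by apply: sumr_ge0.
Qed.

Lemma greedy_cut : exists t, [/\ (t <= m)%N,
  (forall y : 'I_n, (y < t)%N -> greedy y = cap y) &
  (forall y : 'I_n, (t < y)%N -> greedy y = 0)].
Proof.
have ex_cut : exists k, (m <= k)%N || (T <= cap_below k.+1) by exists m; rewrite leqnn.
case: (ex_minnP ex_cut) => t t_cut t_min; exists t; split=> [|y yt|y yt].
- by apply: t_min; rewrite leqnn.
- have : ~~ (T <= cap_below y.+1).
    by apply: contraL yt => Ty; rewrite -leqNgt t_min ?Ty ?orbT.
  rewrite -ltNge /cap_below sum_ltn_succ -/(cap_below y) => Tlt.
  have c0 := cap_ge0 y.
  by rewrite /greedy max_r ?min_l; lra.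
- have Ty : T <= cap_below y.
    case/orP: t_cut => [mt|Tt]; first by have := ltn_ord y; lia.
    exact: le_trans Tt (cap_below_le yt).
  by rewrite /greedy max_l ?min_r ?cap_ge0 // subr_le0.
Qed.

End Greedy.

Section SharpLaw.
Variables (R : realFieldType) (m : nat).
Local Notation n := m.+1.
Variable W : resp R n.
Hypothesis W_ge0 : forall a b c e, 0 <= W a b c e.
Hypothesis W_sum1 : rsum W = 1.
Local Notation p := (pobs W).

Definition type_mass (c e : bool) : R := \sum_(a < n) \sum_(b < n) W a b c e.

Let type_mass_ge0 c e : 0 <= type_mass c e.
Proof. by do 2![apply: sumr_ge0 => ? _]. Qed.

Let type_mass_sum :
  type_mass false false + type_mass false true + type_mass true false + type_mass true true = 1.
Proof.
rewrite -W_sum1 /type_mass -!big_split; apply: eq_bigr => a _.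
by rewrite -!big_split; apply: eq_bigr => b _; rewrite !big_bool /=; lra.
Qed.

Let sum_p00 : \sum_y p y false false = type_mass false false + type_mass false true.
Proof.
rewrite /type_mass -big_split; apply: eq_bigr => a _.
by rewrite pobs_d0z0 -big_split; apply: eq_bigr => b _; rewrite big_bool /=; lra.
Qed.

Let sum_p01 : \sum_y p y false true = type_mass false false + type_mass true false.
Proof.
rewrite /type_mass -big_split; apply: eq_bigr => a _.
by rewrite pobs_d0z1 -big_split; apply: eq_bigr => b _; rewrite big_bool /=; lra.
Qed.

Let sum_p10 : \sum_y p y true false = type_mass true false + type_mass true true.
Proof.
rewrite /type_mass (exchange_big _ _ _ _ _ (fun a b => W a b true false)).
rewrite (exchange_big _ _ _ _ _ (fun a b => W a b true true)) -big_split.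
apply: eq_bigr => b _; rewrite pobs_d1z0 -big_split; apply: eq_bigr => a _.
by rewrite big_bool /=; lra.
Qed.

Let sum_p11 : \sum_y p y true true = type_mass false true + type_mass true true.
Proof.
rewrite /type_mass (exchange_big _ _ _ _ _ (fun a b => W a b false true)).
rewrite (exchange_big _ _ _ _ _ (fun a b => W a b true true)) -big_split.
apply: eq_bigr => b _; rewrite pobs_d1z1 -big_split; apply: eq_bigr => a _.
by rewrite big_bool /=; lra.
Qed.

Let p_ge0 y d z : 0 <= p y d z.
Proof. exact: pobs_ge0. Qed.

Definition nt_cap (y : 'I_n) : R := Num.min (p y false false) (p y false true).
Definition at_cap (y : 'I_n) : R := Num.min (p y true false) (p y true true).

Let nt_cap_ge0 y : 0 <= nt_cap y.
Proof. by rewrite le_min !p_ge0. Qed.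

Let at_cap_ge0 y : 0 <= at_cap y.
Proof. by rewrite le_min !p_ge0. Qed.

Let never_takers_le : type_mass false false <= \sum_y nt_cap y.
Proof.
apply: ler_sum => a _; rewrite le_min pobs_d0z0 pobs_d0z1.
by apply/andP; split; apply: ler_sum => b _; rewrite big_bool /= lerDr.
Qed.

Let always_takers_le : type_mass true true <= \sum_y at_cap y.
Proof.
rewrite /type_mass exchange_big; apply: ler_sum => b _.
rewrite le_min pobs_d1z0 pobs_d1z1.
by apply/andP; split; apply: ler_sum => a _; rewrite big_bool /= lerDl.
Qed.

Definition nt_excess : R := \sum_y p y false false + \sum_y p y false true - 1.

Let nt_excessE : nt_excess = type_mass false false - type_mass true true.
Proof. by rewrite /nt_excess sum_p00 sum_p01; have := type_mass_sum; lra. Qed.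

Definition at_total : R := Num.min (\sum_y at_cap y) (\sum_y nt_cap y - nt_excess).
Definition nt_total : R := at_total + nt_excess.

Let at_total_bounds : 0 <= at_total <= \sum_y at_cap y.
Proof.
rewrite ge_min lexx le_min sumr_ge0 //= nt_excessE.
by have := type_mass_ge0 true true; have := never_takers_le; lra.
Qed.

Let nt_total_bounds : 0 <= nt_total <= \sum_y nt_cap y.
Proof.
have -> : nt_total = Num.min (\sum_y at_cap y + nt_excess) (\sum_y nt_cap y).
  by rewrite /nt_total /at_total addr_minl subrK.
rewrite le_min ge_min lexx orbT sumr_ge0 // andbT nt_excessE.
by have := type_mass_ge0 false false; have := always_takers_le; lra.
Qed.

Let saturation : at_total = \sum_y at_cap y \/ nt_total = \sum_y nt_cap y.
Proof.
by rewrite /nt_total /at_total !minEle; case: ifP => _; [left | right; lra].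
Qed.

Definition nt_mass : 'I_n -> R := greedy nt_cap nt_total.
(* Always-takers are filled greedily from the top, i.e. along the reversed order. *)
Definition at_mass (y : 'I_n) : R := greedy (fun i => at_cap (rev_ord i)) at_total (rev_ord y).

Let sum_rev_ord (F : 'I_n -> R) : \sum_y F (rev_ord y) = \sum_y F y.
Proof. by rewrite [RHS](reindex_inj rev_ord_inj). Qed.

Let at_cap_rev_ge0 i : 0 <= at_cap (rev_ord i).
Proof. exact: at_cap_ge0. Qed.

Let nt_mass_bounds y : 0 <= nt_mass y <= nt_cap y.
Proof. by rewrite (greedy_ge0 _ nt_cap_ge0) greedy_le_cap. Qed.

Let at_mass_bounds y : 0 <= at_mass y <= at_cap y.
Proof.
by rewrite /at_mass (greedy_ge0 _ at_cap_rev_ge0) (le_trans (greedy_le_cap _ _ _)) ?rev_ordK.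
Qed.

Let sum_nt_mass : \sum_y nt_mass y = nt_total.
Proof. exact: sum_greedy. Qed.

Let sum_at_mass : \sum_y at_mass y = at_total.
Proof.
rewrite /at_mass (sum_rev_ord (greedy _ _)) (sum_greedy at_cap_rev_ge0) //.
by rewrite (sum_rev_ord at_cap).
Qed.

Let nt_mass_full : nt_total = \sum_y nt_cap y -> forall y, nt_mass y = nt_cap y.
Proof. exact: greedy_full. Qed.

Let at_mass_full : at_total = \sum_y at_cap y -> forall y, at_mass y = at_cap y.
Proof.
move=> sat y; rewrite /at_mass (greedy_full at_cap_rev_ge0) ?rev_ordK //.
by rewrite (sum_rev_ord at_cap).
Qed.

Let nt_mass_cut : exists t, [/\ (t <= m)%N,
  (forall y : 'I_n, (y < t)%N -> nt_mass y = nt_cap y) &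
  (forall y : 'I_n, (t < y)%N -> nt_mass y = 0)].
Proof. exact: greedy_cut nt_total nt_cap_ge0. Qed.

Let at_mass_cut : exists t, [/\ (t <= m)%N,
  (forall y : 'I_n, (t < y)%N -> at_mass y = at_cap y) &
  (forall y : 'I_n, (y < t)%N -> at_mass y = 0)].
Proof.
have [t [tm lo hi]] := greedy_cut at_total at_cap_rev_ge0.
exists (m - t)%N; split=> [|y yt|y yt]; first exact: leq_subr.
- by rewrite /at_mass lo /= ?rev_ordK //=; have := ltn_ord y; lia.
- by rewrite /at_mass hi //=; have := ltn_ord y; lia.
Qed.

Definition co_total : R := 1 - \sum_y p y false true - at_total.
Definition df_total : R := 1 - \sum_y p y false false - at_total.

Let sum_co0 : \sum_y (p y false false - nt_mass y) = co_total.
Proof. by rewrite sumrB sum_nt_mass /nt_total /co_total /nt_excess; lra. Qed.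
Let sum_co1 : \sum_y (p y true true - at_mass y) = co_total.
Proof.
rewrite sumrB sum_at_mass /co_total sum_p01 sum_p11; have := type_mass_sum; lra.
Qed.
Let sum_df0 : \sum_y (p y false true - nt_mass y) = df_total.
Proof. by rewrite sumrB sum_nt_mass /nt_total /df_total /nt_excess; lra. Qed.
Let sum_df1 : \sum_y (p y true false - at_mass y) = df_total.
Proof.
rewrite sumrB sum_at_mass /df_total sum_p00 sum_p10; have := type_mass_sum; lra.
Qed.

Let res00_ge0 y : 0 <= p y false false - nt_mass y.
Proof. by have /andP[_] := nt_mass_bounds y; rewrite subr_ge0 le_min => /andP[]. Qed.
Let res01_ge0 y : 0 <= p y false true - nt_mass y.
Proof. by have /andP[_] := nt_mass_bounds y; rewrite subr_ge0 le_min => /andP[]. Qed.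
Let res10_ge0 y : 0 <= p y true false - at_mass y.
Proof. by have /andP[_] := at_mass_bounds y; rewrite subr_ge0 le_min => /andP[]. Qed.
Let res11_ge0 y : 0 <= p y true true - at_mass y.
Proof. by have /andP[_] := at_mass_bounds y; rewrite subr_ge0 le_min => /andP[]. Qed.

Let co_total_ge0 : 0 <= co_total.
Proof. by rewrite -sum_co1 sumr_ge0. Qed.
Let df_total_ge0 : 0 <= df_total.
Proof. by rewrite -sum_df1 sumr_ge0. Qed.

Definition Wsharp : resp R n := fun a b c e =>
  match c, e with
  | false, false => if b == ord0 then nt_mass a else 0
  | true, true => if a == ord_max then at_mass b else 0
  | false, true => (p a false false - nt_mass a) * (p b true true - at_mass b) / co_total
  | true, false => (p a false true - nt_mass a) * (p b true false - at_mass b) / df_total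
  end.

Lemma Wsharp_ge0 a b c e : 0 <= Wsharp a b c e.
Proof.
case: c; case: e => /=.
- by case: ifP => _ //; have /andP[] := at_mass_bounds b.
- by rewrite divr_ge0 ?mulr_ge0.
- by rewrite divr_ge0 ?mulr_ge0.
- by case: ifP => _ //; have /andP[] := nt_mass_bounds a.
Qed.

(* [K] may vanish: then [f = 0] and the junk value [x / 0 = 0] is harmless. *)
Let mul_sum_div (f g : 'I_n -> R) K y : (forall i, 0 <= f i) ->
  \sum_i f i = K -> \sum_i g i = K -> f y * (\sum_i g i) / K = f y.
Proof.
move=> f0 sf sg; rewrite sg; have [K0|K0] := eqVneq K 0; last by rewrite mulfK.
by rewrite (psumr_eq0P (fun i _ => f0 i) (etrans sf K0)) // !mul0r.
Qed.

Lemma pobs_Wsharp y d z : pobs Wsharp y d z = p y d z.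
Proof.
case: d; case: z.
- rewrite [LHS]pobs_d1z1; under eq_bigr => a _ do rewrite big_bool /=.
  rewrite big_split /= -big_mkcond big_pred1_eq -!mulr_suml [_ * (p y _ _ - _)]mulrC.
  by rewrite (mul_sum_div _ res11_ge0 sum_co1 sum_co0); lra.
- rewrite [LHS]pobs_d1z0; under eq_bigr => a _ do rewrite big_bool /=.
  rewrite big_split /= -big_mkcond big_pred1_eq -!mulr_suml [_ * (p y _ _ - _)]mulrC.
  by rewrite (mul_sum_div _ res10_ge0 sum_df1 sum_df0); lra.
- rewrite [LHS]pobs_d0z1; under eq_bigr => b _ do rewrite big_bool /=.
  rewrite big_split /= -big_mkcond big_pred1_eq -mulr_suml -mulr_sumr.
  by rewrite (mul_sum_div _ res01_ge0 sum_df0 sum_df1); lra.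
- rewrite [LHS]pobs_d0z0; under eq_bigr => b _ do rewrite big_bool /=.
  rewrite big_split /= -big_mkcond big_pred1_eq -mulr_suml -mulr_sumr.
  by rewrite (mul_sum_div _ res00_ge0 sum_co0 sum_co1); lra.
Qed.

Variable gam : nat -> R.

Let never_support a b : Wsharp a b false false != 0 -> b = ord0 /\ nt_mass a != 0.
Proof. by rewrite /Wsharp /=; case: (eqVneq b ord0); rewrite ?eqxx. Qed.

Let always_support a b : Wsharp a b true true != 0 -> a = ord_max /\ at_mass b != 0.
Proof. by rewrite /Wsharp /=; case: (eqVneq a ord_max); rewrite ?eqxx. Qed.

Let complier_support a b : Wsharp a b false true != 0 ->
  [/\ p a false false != nt_mass a, p b true true != at_mass b & co_total != 0].
Proof.
move=> hW; split; apply/eqP => eq0; move: hW; rewrite /Wsharp /= eq0.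
- by rewrite subrr !mul0r eqxx.
- by rewrite subrr mulr0 mul0r eqxx.
- by rewrite invr0 mulr0 eqxx.
Qed.

Let defier_support a b : Wsharp a b true false != 0 ->
  [/\ p a false true != nt_mass a, p b true false != at_mass b & df_total != 0].
Proof.
move=> hW; split; apply/eqP => eq0; move: hW; rewrite /Wsharp /= eq0.
- by rewrite subrr !mul0r eqxx.
- by rewrite subrr mulr0 mul0r eqxx.
- by rewrite invr0 mulr0 eqxx.
Qed.

Lemma tight_Wsharp (B : bmat n) al :
  (forall a, nt_mass a != 0 -> vscore (uvec gam B al) a ord0 false false = gam 0 - gam a) ->
  (forall b, at_mass b != 0 -> vscore (uvec gam B al) ord_max b true true = gam b - gam m) ->
  (forall a b, Wsharp a b false true != 0 -> B a false false && B b true true) ->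
  (forall a b, Wsharp a b true false != 0 -> B b true false && B a false true) ->
  tight gam (uvec gam B al) Wsharp.
Proof.
move=> hN hA hC hF a b [] [] hW.
- by have [-> /hA] := always_support hW.
- by case/andP: (hF a b hW); apply: vscore_defier.
- by case/andP: (hC a b hW); apply: vscore_complier.
- by have [-> /hN] := never_support hW.
Qed.

Definition sel0 (a : 'I_n) : bool := p a false true < p a false false.
Definition sel1 (b : 'I_n) : bool := p b true true < p b true false.

Let sel0_of a : p a false false != nt_cap a -> sel0 a.
Proof. by rewrite /sel0 /nt_cap minEle; case: leP; rewrite ?eqxx. Qed.
Let nsel0_of a : p a false true != nt_cap a -> ~~ sel0 a.
Proof. by rewrite /sel0 /nt_cap minEle; case: leP; rewrite ?eqxx. Qed.
Let sel1_of b : p b true false != at_cap b -> sel1 b.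
Proof. by rewrite /sel1 /at_cap minEle; case: leP; rewrite ?eqxx. Qed.
Let nsel1_of b : p b true true != at_cap b -> ~~ sel1 b.
Proof. by rewrite /sel1 /at_cap minEle; case: leP; rewrite ?eqxx. Qed.

Let exists_residual (f : 'I_n -> R) K : (forall i, 0 <= f i) -> \sum_i f i = K -> K != 0 ->
  exists i, f i != 0.
Proof.
move=> f0 sf /eqP K0.
have [|i /andP[_ fi]] := @psumr_neq0P _ _ xpredT f (fun i _ => f0 i); first by rewrite sf.
by exists i; rewrite gt_eqF.
Qed.

Lemma tight_S2 (f0 f1 : 'I_n -> bool) (B := bcut m 1 f0 f1) :
  (forall a b, Wsharp a b false true != 0 -> B a false false && B b true true) ->
  (forall a b, Wsharp a b true false != 0 -> B b true false && B a false true) ->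
  tight gam (uvec gam B (- gam 0 - gam m)) Wsharp.
Proof.
move=> hC hF; apply: tight_Wsharp => // *; [exact: vscore_never_S2 | exact: vscore_always_S2].
Qed.

Lemma tight_S2_sel :
  (forall a : 'I_n, (a < m)%N -> nt_mass a = nt_cap a) ->
  (forall b : 'I_n, (0 < b)%N -> at_mass b = at_cap b) ->
  tight gam (uvec gam (bcut m 1 sel0 sel1) (- gam 0 - gam m)) Wsharp.
Proof.
move=> hN hA; apply: tight_S2 => a b hW.
- have [pa pb _] := complier_support hW; apply/andP; split.
  + have [am|ma] := ltnP a m; last by rewrite bcut0_ge.
    by rewrite bcut0_lt // sel0_of // -hN.
  + have [b0|b0] := posnP b; first by rewrite bcut1_lt ?b0.
    by rewrite bcut1_ge // nsel1_of // -hA.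
- have [pa pb _] := defier_support hW; apply/andP; split.
  + have [b0|b0] := posnP b; first by rewrite bcut1_lt ?b0.
    by rewrite bcut1_ge // sel1_of // -hA.
  + have [am|ma] := ltnP a m; last by rewrite bcut0_ge.
    by rewrite bcut0_lt // nsel0_of // -hN.
Qed.

Let exists_sel1 : (forall b, at_mass b = at_cap b) -> df_total != 0 -> exists b, sel1 b.
Proof.
move=> hA /(exists_residual res10_ge0 sum_df1) [b pb].
by exists b; rewrite sel1_of // -hA -subr_eq0.
Qed.

Let exists_nsel1 : (forall b, at_mass b = at_cap b) -> co_total != 0 -> exists b, ~~ sel1 b.
Proof.
move=> hA /(exists_residual res11_ge0 sum_co1) [b pb].
by exists b; rewrite nsel1_of // -hA -subr_eq0.
Qed.

Let exists_sel0 : (forall a, nt_mass a = nt_cap a) -> co_total != 0 -> exists a, sel0 a.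
Proof.
move=> hN /(exists_residual res00_ge0 sum_co0) [a pa].
by exists a; rewrite sel0_of // -hN -subr_eq0.
Qed.

Let exists_nsel0 : (forall a, nt_mass a = nt_cap a) -> df_total != 0 -> exists a, ~~ sel0 a.
Proof.
move=> hN /(exists_residual res01_ge0 sum_df0) [a pa].
by exists a; rewrite nsel0_of // -hN -subr_eq0.
Qed.

Lemma tight_S1 t : (forall b, at_mass b = at_cap b) ->
  (forall a : 'I_n, (a < t)%N -> nt_mass a = nt_cap a) ->
  (forall a : 'I_n, (t < a)%N -> nt_mass a = 0) ->
  tight gam (uvec gam (bcut t 0 sel0 sel1) (- gam 0 - gam t)) Wsharp.
Proof.
move=> hA lo hi; apply: tight_Wsharp => [a nz|b _|a b hW|a b hW].
- have [at_|ta] := ltnP a t; first by rewrite vscore_never_split // bcut0_split.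
  have <- : nat_of_ord a = t.
    by apply/eqP; rewrite eqn_leq ta andbT leqNgt; apply: contra nz => /hi ->.
  by rewrite vscore_never_both ?bcut0_ge //; lra.
- exact/vscore_always_split/bcut1_split.
- have [pa pb _] := complier_support hW; apply/andP; split.
  + have [at_|ta] := ltnP a t; last by rewrite bcut0_ge.
    by rewrite bcut0_lt // sel0_of // -lo.
  + by rewrite bcut1_ge // nsel1_of // -hA.
- have [pa pb _] := defier_support hW; apply/andP; split.
  + by rewrite bcut1_ge // sel1_of // -hA.
  + have [at_|ta] := ltnP a t; last by rewrite bcut0_ge.
    by rewrite bcut0_lt // nsel0_of // -lo.
Qed.

Lemma tight_S3 t : (forall a, nt_mass a = nt_cap a) ->
  (forall b : 'I_n, (t < b)%N -> at_mass b = at_cap b) ->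
  (forall b : 'I_n, (b < t)%N -> at_mass b = 0) ->
  tight gam (uvec gam (bcut n t.+1 sel0 sel1) (- gam t - gam m)) Wsharp.
Proof.
move=> hN hi lo; apply: tight_Wsharp => [a _|b nz|a b hW|a b hW].
- exact/vscore_never_split/bcut0_split.
- have [tb|bt] := ltnP t b; first by rewrite vscore_always_split // bcut1_split.
  have <- : nat_of_ord b = t.
    by apply/eqP; rewrite eqn_leq bt leqNgt; apply: contra nz => /lo ->.
  by rewrite vscore_always_both ?bcut1_lt //; lra.
- have [pa pb _] := complier_support hW; apply/andP; split.
  + by rewrite bcut0_lt // sel0_of // -hN.
  + have [tb|bt] := ltnP t b; last by rewrite bcut1_lt.
    by rewrite bcut1_ge // nsel1_of // -hi.
- have [pa pb _] := defier_support hW; apply/andP; split.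
  + have [tb|bt] := ltnP t b; last by rewrite bcut1_lt.
    by rewrite bcut1_ge // sel1_of // -hi.
  + by rewrite bcut0_lt // nsel0_of // -hN.
Qed.

Let tight_inS2 (f0 f1 : 'I_n -> bool) :
  tight gam (uvec gam (bcut m 1 f0 f1) (- gam 0 - gam m)) Wsharp ->
  exists v, inV gam v /\ tight gam v Wsharp.
Proof.
move=> hv; eexists; split; last exact: hv.
by exists (bcut m 1 f0 f1); right; left; split=> [|y d z]; first exact: inS2_bcut.
Qed.

Lemma exists_tight : exists v, inV gam v /\ tight gam v Wsharp.
Proof.
(* Without defiers (resp. compliers) a matrix of S2 fits whatever the greedy fills are;
   otherwise one side is saturated and the cut of the other side selects S1, S2 or S3. *)
have [df0|df0] := eqVneq df_total 0.
  apply: (@tight_inS2 xpredT xpred0); apply: tight_S2 => a b hW.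
    by rewrite /bcut !orbT.
  by have [_ _] := defier_support hW; rewrite df0 eqxx.
have [co0|co0] := eqVneq co_total 0.
  apply: (@tight_inS2 xpred0 xpredT); apply: tight_S2 => a b hW.
    by have [_ _] := complier_support hW; rewrite co0 eqxx.
  by rewrite /bcut !orbT.
case: saturation => [/at_mass_full hA | /nt_mass_full hN].
- have [t [tm lo hi]] := nt_mass_cut.
  have [tm'|mt] := ltnP t m; last first.
    apply: (tight_inS2 (tight_S2_sel _ _)) => a am; last exact: hA.
    by apply: lo; apply: leq_trans am mt.
  eexists; split; last exact: tight_S1 hA lo hi.
  exists (bcut t 0 sel0 sel1); left; exists t; split=> [|y d z] //.
  by apply: inS1_bcut => //; [exact: exists_sel1 | exact: exists_nsel1].
- have [t [tm hi lo]] := at_mass_cut.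
  have [t0|tpos] := posnP t.
    apply: (tight_inS2 (tight_S2_sel _ _)) => b bpos; first exact: hN.
    by apply: hi; rewrite t0.
  eexists; split; last exact: tight_S3 hN hi lo.
  exists (bcut n t.+1 sel0 sel1); right; right; exists t; split=> [|y d z] //.
  by apply: inS3_bcut => //; [exact: exists_sel0 | exact: exists_nsel0].
Qed.

End SharpLaw.

Section Sharpness.
Variables (R : realFieldType) (m : nat).
Local Notation n := m.+1.
Variable gam : nat -> R.
Hypothesis gam_mono : forall i j : nat, (i <= j)%N -> (j < n)%N -> gam i <= gam j.

Lemma lower_bound_sharp (q : fdlaw R n) : valid_law q -> 0 < pZ q false -> 0 < pZ q true ->
  exists v, inV gam v /\
    (forall w, inV gam w -> dot w (pvec q) <= dot v (pvec q)) /\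
    exists q' : fdlaw R n, valid_law q' /\
      (forall y d z, obs q' y d z = obs q y d z) /\ ATE gam q' = dot v (pvec q).
Proof.
move=> [hq hr] hz0 hz1.
have W0 := pU_ge0 hq; have W1 : rsum (pU q) = 1 by case: hq.
pose W := Wsharp (pU q); have pobsW := pobs_Wsharp W0 W1.
have pvecE y d z : pvec q y d z = pobs W y d z.
  by rewrite pobsW; case: z; exact: pvec_rand_assign.
have [v [hv v_tight]] := exists_tight W0 W1 gam.
pose q' : fdlaw R n := fun a b c e z => W a b c e * pZ q z.
have rsumW : rsum W = 1 by rewrite (eq_rsum_pobs pobsW).
have pU' a b c e : pU q' a b c e = W a b c e.
  by rewrite /pU -mulr_sumr sum_pZ W1 mulr1.
have pZ' z : pZ q' z = pZ q z by rewrite -[RHS]mul1r -rsumW rsum_mulr.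
exists v; split=> //; split.
  move=> w hw; rewrite !(eq_dot _ pvecE) (dot_pobs_tight v_tight).
  exact: dot_pobs_le (Wsharp_ge0 W0 W1) hw.
exists q'; split; [split; [split|] | split].
- by move=> a b c e z; rewrite mulr_ge0 ?Wsharp_ge0 // ltW //; case: z.
- by rewrite -[RHS]rsumW; apply: eq_rsum => a b c e; rewrite -pU'.
- by move=> a b c e z; rewrite pU' pZ'.
- by move=> y d z; rewrite obs_scale pobsW obs_rand_assign.
- rewrite ATE_pU (eq_dot _ pvecE) (dot_pobs_tight v_tight).
  by apply: eq_rsum => a b c e; rewrite pU'.
Qed.

Lemma ATE_le_dot_pbar (q : fdlaw R n) v : valid_law q ->
  0 < pZ q false -> 0 < pZ q true -> inV gam v -> ATE gam q <= - dot v (pbar q).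
Proof.
move=> hq hz0 hz1 hv.
have := dot_pvec_le_ATE gam_mono (valid_law_swap hq); rewrite !pZ_swap => /(_ v hz0 hz1 hv).
by rewrite ATE_swap (eq_dot _ (pvec_swap q)) lerNr.
Qed.

Lemma upper_bound_sharp (q : fdlaw R n) : valid_law q -> 0 < pZ q false -> 0 < pZ q true ->
  exists v, inV gam v /\
    (forall w, inV gam w -> dot w (pbar q) <= dot v (pbar q)) /\
    exists q' : fdlaw R n, valid_law q' /\
      (forall y d z, obs q' y d z = obs q y d z) /\ ATE gam q' = - dot v (pbar q).
Proof.
move=> hq hz0 hz1; have pbarE w := eq_dot w (pvec_swap q).
have [||v [hv [vmax [q' [hq' [obs' ATE']]]]]] :=
  lower_bound_sharp (valid_law_swap hq); rewrite ?pZ_swap //.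
exists v; split=> //; split.
  by move=> w hw; rewrite -!pbarE; exact: vmax.
exists (swapq q'); split; first exact: valid_law_swap.
split; last by rewrite ATE_swap ATE' pbarE.
by move=> y d z; rewrite obs_swap obs' obs_swap negbK.
Qed.

End Sharpness.

Theorem theorem2 (R : realFieldType) (n : nat) (gam : nat -> R)
  (hgam : forall i j : nat, (i < j)%N -> (j < n)%N -> gam i < gam j) :
  (* validity: max_{v in V} v'p <= ATE <= - max_{v in V} v'pbar *)
  (forall q : fdlaw R n, valid_law q -> 0 < pZ q false -> 0 < pZ q true ->
     (forall v, inV gam v -> dot v (pvec q) <= ATE gam q) /\
     (forall v, inV gam v -> ATE gam q <= - dot v (pbar q))) /\
  (* the maxima exist and are sharp *)
  (forall q : fdlaw R n, valid_law q -> 0 < pZ q false -> 0 < pZ q true ->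
     (exists v, inV gam v /\
        (forall w, inV gam w -> dot w (pvec q) <= dot v (pvec q)) /\
        exists q' : fdlaw R n, valid_law q' /\
          (forall y d z, obs q' y d z = obs q y d z) /\
          ATE gam q' = dot v (pvec q)) /\
     (exists v, inV gam v /\
        (forall w, inV gam w -> dot w (pbar q) <= dot v (pbar q)) /\
        exists q' : fdlaw R n, valid_law q' /\
          (forall y d z, obs q' y d z = obs q y d z) /\
          ATE gam q' = - dot v (pbar q))).
Proof.
case: n gam hgam => [|m] gam hgam.
  by split=> q [[_]]; rewrite big_ord0 => /eqP; rewrite eq_sym oner_eq0.
have gam_mono i j : (i <= j)%N -> (j < m.+1)%N -> gam i <= gam j.
  by rewrite leq_eqVlt => /predU1P[-> //|ij jn]; exact/ltW/hgam.
split=> q hq hz0 hz1; split.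
- by move=> v; exact: dot_pvec_le_ATE.
- by move=> v; exact: ATE_le_dot_pbar.
- exact: lower_bound_sharp.
- exact: upper_bound_sharp.
Qed.
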